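(* Let $\mathbf{a}\in\mathbb{C}^{2N}$ be an eigenvector of $\mathbf{D}$ with eigenvalue $\mu\in\mathbb{C}$. Then $\bm{\Gamma}\mathbf{a}^{*}$ is an eigenvector of $\mathbf{D}$ with eigenvalue $-\mu^{*}$. Furthermore, if $\mathbf{a},\mathbf{b}$ are eigenvectors of $\mathbf{D}$ and $\mathbf{a}'=\bm{\Gamma}\mathbf{a}^{*}$, $\mathbf{b}'=\bm{\Gamma}\mathbf{b}^{*}$, then $$\langle \mathbf{a},\mathbf{b}\rangle^{*}=-\langle \mathbf{a}',\mathbf{b}'\rangle,\qquad \langle \mathbf{a},\mathbf{b}'\rangle=-\langle \mathbf{b},\mathbf{a}'\rangle .$$
   Context: Fix an integer $N\ge 1$, real numbers $v$ with $|v|<1$, $L>0$, $L_{\star}\ge 0$, an integer $M\ge 1$ and real coefficients $c_{1}=1,c_{2},\dots,c_{M}$. Let $F(k)=\sum_{i=1}^{M}(-1)^{i-1}c_{i}L_{\star}^{2i-2}k^{2i-1}$ and $k_{n}=n\pi/L$, and assume $F(k_{n})^{2}\neq v^{2}k_{n}^{2}$ for $n=1,\dots,N$. Put $u_{n}=\sqrt{|F(k_{n})^{2}-v^{2}k_{n}^{2}|}/k_{n}>0$, and $\varepsilon_{n}=1$ if $F(k_{n})^{2}-v^{2}k_{n}^{2}>0$, $\varepsilon_{n}=0$ otherwise. Define $N\times N$ matrices $\bm\sigma,\bm\rho,\bm\xi$ by $\sigma_{nn}=0$, $\sigma_{nm}=\dfrac{2iv\sqrt{nm}\,[1-(-1)^{n+m}]}{\pi\sqrt{u_{n}u_{m}}\,(m^{2}-n^{2})}$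 for $n\neq m$, $\bm\rho=\mathrm{diag}(n u_{n}\varepsilon_{n})$, $\bm\xi=\mathrm{diag}(-n u_{n}(1-\varepsilon_{n}))$. With $\mathbf{I}$ the $N\times N$ identity, define the $2N\times 2N$ matrices $\bm{\Sigma}=\begin{pmatrix}\mathbf{I}&\mathbf{0}\\ \mathbf{0}&-\mathbf{I}\end{pmatrix}$, $\bm{\Gamma}=\begin{pmatrix}\mathbf{0}&\mathbf{I}\\ \mathbf{I}&\mathbf{0}\end{pmatrix}$, $\mathbf{R}=\bm{\Sigma}-\begin{pmatrix}\bm\sigma&\bm\sigma\\ \bm\sigma&\bm\sigma\end{pmatrix}$, $\bm{\Omega}=\begin{pmatrix}\bm\rho&\bm\xi\\ \bm\xi&\bm\rho\end{pmatrix}$. Standing assumption: $\mathbf{R}$ is invertible. Let $\mathbf{D}=\mathbf{R}^{-1}\bm{\Omega}$. Here ${}^{*}$ denotes entrywise complex conjugation, ${}^{\mathrm{H}}$ the conjugate transpose, and the $\mathbf{R}$-inner product is $\langle\mathbf{x},\mathbf{y}\rangle=\mathbf{x}^{\mathrm{H}}\mathbf{R}\mathbf{y}$. *)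

From mathcomp Require Import all_boot all_order all_algebra.
From mathcomp Require Export complex.
From mathcomp Require Import reals trigo.
Set Implicit Arguments. Unset Strict Implicit. Unset Printing Implicit Defensive.
Import GRing.Theory Num.Theory.
Local Open Scope ring_scope.
Local Open Scope complex_scope.

Section Defs.
Variable R : realType.
Variables (N : nat) (v L Lstar : R) (M : nat) (c : nat -> R).

Definition Fk (k : R) : R :=
  \sum_(1 <= i < M.+1) (-1) ^+ (i - 1) * c i * Lstar ^+ (2 * i - 2) * k ^+ (2 * i - 1).

Definition kn (n : nat) : R := n%:R * pi / L.

Definition disc (n : nat) : R := Fk (kn n) ^+ 2 - v ^+ 2 * kn n ^+ 2.

Definition un (n : nat) : R := Num.sqrt `|disc n| / kn n.

Definition epsn (n : nat) : bool := 0 < disc n.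

(* N x N matrices; index i : 'I_N stands for n = i+1 *)
Definition sigma_mx : 'M[R[i]]_N :=
  \matrix_(i < N, j < N)
    (let n := i.+1 in let m := j.+1 in
     if i == j then 0
     else 'i * ((2 * v * Num.sqrt (n * m)%:R * (1 - (-1) ^+ (n + m)))
                / (pi * Num.sqrt (un n * un m) * (m%:R ^+ 2 - n%:R ^+ 2)))%:C).

Definition rho_mx : 'M[R[i]]_N :=
  \matrix_(i < N, j < N)
    (if i == j then (i.+1%:R * un i.+1 * (epsn i.+1)%:R)%:C else 0).

Definition xi_mx : 'M[R[i]]_N :=
  \matrix_(i < N, j < N)
    (if i == j then (- (i.+1%:R * un i.+1 * (1 - (epsn i.+1)%:R)))%:C else 0).

Definition Sigma_mx : 'M[R[i]]_(N + N) := block_mx 1%:M 0 0 (- 1%:M).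
Definition Gamma_mx : 'M[R[i]]_(N + N) := block_mx 0 1%:M 1%:M 0.
Definition R_mx : 'M[R[i]]_(N + N) :=
  Sigma_mx - block_mx sigma_mx sigma_mx sigma_mx sigma_mx.
Definition Omega_mx : 'M[R[i]]_(N + N) := block_mx rho_mx xi_mx xi_mx rho_mx.
Definition D_mx : 'M[R[i]]_(N + N) := invmx R_mx *m Omega_mx.

Definition conjv (x : 'cV[R[i]]_(N + N)) : 'cV[R[i]]_(N + N) := map_mx conjc x.

Definition Rinner (x y : 'cV[R[i]]_(N + N)) : R[i] :=
  ((conjv x)^T *m R_mx *m y) 0 0.

Definition is_eigvec (a : 'cV[R[i]]_(N + N)) (mu : R[i]) : Prop :=
  a != 0 /\ D_mx *m a = mu *: a.

End Defs.

From mathcomp Require Import all_boot all_order all_algebra.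
From mathcomp Require Import complex.
From mathcomp Require Import reals trigo.
Set Implicit Arguments. Unset Strict Implicit. Unset Printing Implicit Defensive.
Import GRing.Theory Num.Theory.
Local Open Scope ring_scope.
Local Open Scope complex_scope.

(* The map a |-> Gamma a^* is an involutive antilinear symmetry of the
   generalized eigenproblem Omega a = mu R a: Omega is real and commutes with
   Gamma, while R is Hermitian (sigma is skew-symmetric with purely imaginary
   entries) and Gamma R^* Gamma = -R.  Conjugating Omega a = mu R a and
   multiplying by Gamma gives Omega a' = -mu^* R a'; the two identities for the
   R-inner product follow from Gamma R^* Gamma = -R, and from R^T = R^* by
   transposing the 1x1 matrix a'^H R b. *)

Local Notation conjm A := (map_mx conjc A).

Lemma eigen_invmx_mulmx (R : comUnitRingType) (n : nat) (A : 'M[R]_n) :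
  A \in unitmx -> forall (B : 'M_n) (a : 'cV_n) (mu : R),
  invmx A *m B *m a = mu *: a <-> B *m a = mu *: (A *m a).
Proof.
move=> Au B a mu; rewrite -mulmxA; split=> [Ba|->].
  by rewrite -{1}(mulKVmx Au (B *m a)) Ba scalemxAr.
by rewrite -scalemxAr mulKmx.
Qed.

Definition sesq {R : rcfType} {n : nat} (A : 'M[R[i]]_n) (x y : 'cV[R[i]]_n) :=
  ((conjm x)^T *m A *m y) 0 0.

Section Antiunitary.
Variables (R : rcfType) (n : nat).

Lemma map_conjmK m p : involutive (@map_mx _ _ (@conjc R) m p).
Proof. by move=> A; apply/matrixP => i j; rewrite !mxE conjcK. Qed.

Lemma conjc_iM (r : R) : ('i * r%:C)^* = - ('i * r%:C).
Proof.
by apply/eqP; rewrite eq_complex /= !mul0r !mul1r !subr0 !add0r !oppr0 !eqxx.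
Qed.

Variable G : 'M[R[i]]_n.
Hypotheses (G_invol : G *m G = 1%:M) (conj_G : conjm G = G) (tr_G : G^T = G).

Lemma antiunitary_eq0 (x : 'cV_n) : (G *m conjm x == 0) = (x == 0).
Proof.
apply/eqP/eqP => [Tx0|->]; last by rewrite raddf0 mulmx0.
by rewrite -[x]map_conjmK -[conjm x]mul1mx -G_invol -mulmxA Tx0 mulmx0 raddf0.
Qed.

Lemma conjm_antiunitary (x : 'cV_n) : conjm (G *m conjm x) = G *m x.
Proof. by rewrite map_mxM conj_G map_conjmK. Qed.

Variable A : 'M[R[i]]_n.
Hypothesis G_conjA : G *m conjm A = - (A *m G).

Lemma G_A_G : G *m A *m G = - conjm A.
Proof.
have := congr1 (map_mx conjc) G_conjA.
rewrite map_mxN !map_mxM conj_G map_conjmK => ->.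
by rewrite mulNmx -mulmxA G_invol mulmx1.
Qed.

Lemma pencil_eigen_antiunitary (B : 'M[R[i]]_n) (a : 'cV_n) (mu : R[i]) :
  conjm B = B -> G *m B = B *m G ->
  B *m a = mu *: (A *m a) ->
  B *m (G *m conjm a) = - mu^* *: (A *m (G *m conjm a)).
Proof.
move=> conj_B GB Ba.
have conj_Ba : B *m conjm a = mu^* *: (conjm A *m conjm a).
  by rewrite -{1}conj_B -map_mxM Ba map_mxZ map_mxM.
rewrite mulmxA -GB -mulmxA conj_Ba -scalemxAr !mulmxA G_conjA.
by rewrite mulNmx scaleNr scalerN.
Qed.

Lemma sesq_antiunitary_conj (x y : 'cV_n) :
  (sesq A x y)^* = - sesq A (G *m conjm x) (G *m conjm y).
Proof.
rewrite /sesq conjm_antiunitary trmx_mul tr_G -!mulmxA.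
rewrite (mulmxA A) (mulmxA G) (mulmxA G A) G_A_G mulNmx mulmxN.
rewrite [(- (_ : 'M[R[i]]_1)) 0 0]mxE opprK.
by rewrite -{2}[x]map_conjmK [in RHS]map_trmx -!map_mxM [RHS]mxE.
Qed.

Hypothesis tr_A : A^T = conjm A.

Lemma sesq_antiunitary_swap (x y : 'cV_n) :
  sesq A x (G *m conjm y) = - sesq A y (G *m conjm x).
Proof.
rewrite /sesq; set M := _ *m (G *m conjm x).
have -> : M 0 0 = M^T 0 0 by rewrite [RHS]mxE.
rewrite /M !trmx_mul trmxK tr_G tr_A [in RHS]mulmxA -(mulmxA _ G) G_conjA.
by rewrite mulmxN mulNmx [(- (_ : 'M[R[i]]_1)) 0 0]mxE opprK !mulmxA.
Qed.

End Antiunitary.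

Section Matrices.
Variables (R : realType) (N : nat) (v L Lstar : R) (M : nat) (c : nat -> R).
Local Notation sigma := (@sigma_mx R N v L Lstar M c).
Local Notation Gamma := (@Gamma_mx R N).
Local Notation Rm := (@R_mx R N v L Lstar M c).
Local Notation Omega := (@Omega_mx R N v L Lstar M c).

Lemma tr_sigma_mx : sigma^T = - sigma.
Proof.
apply/matrixP => i j; rewrite !mxE eq_sym.
case: eqP => [->|_]; first by rewrite oppr0.
rewrite -mulrN -rmorphN /=; congr (_ * _%:C).
rewrite mulnC addnC [un _ _ _ _ _ j.+1 * _]mulrC.
by rewrite -(opprB (i.+1%:R ^+ 2)) [in RHS]mulrN invrN mulrN opprK.
Qed.

Lemma conj_sigma_mx : conjm sigma = - sigma.
Proof.
apply/matrixP => i j; rewrite !mxE.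
by case: eqP => _; rewrite ?conjc0 ?oppr0 ?conjc_iM.
Qed.

Lemma R_mx_block :
  Rm = block_mx (1%:M - sigma) (- sigma) (- sigma) (- 1%:M - sigma).
Proof. by rewrite /R_mx /Sigma_mx opp_block_mx add_block_mx !add0r. Qed.

Lemma tr_R_mx : Rm^T = conjm Rm.
Proof.
rewrite R_mx_block tr_block_mx map_block_mx !linearB /= !map_mxB !linearN /=.
by rewrite !map_mxN trmx1 map_mx1 tr_sigma_mx conj_sigma_mx.
Qed.

Lemma Gamma_conj_R_mx : Gamma *m conjm Rm = - (Rm *m Gamma).
Proof.
rewrite R_mx_block map_block_mx !map_mxB !map_mxN map_mx1 conj_sigma_mx.
rewrite /Gamma_mx !mulmx_block opp_block_mx !mul0mx !mulmx0 !mul1mx !mulmx1.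
by rewrite !add0r !addr0 !opprB !opprK addrC [1%:M + _]addrC.
Qed.

Lemma Gamma_mxK : Gamma *m Gamma = 1%:M.
Proof.
rewrite /Gamma_mx mulmx_block !mul0mx !mul1mx !add0r !addr0.
by rewrite [RHS]scalar_mx_block.
Qed.

Lemma tr_Gamma_mx : Gamma^T = Gamma.
Proof. by rewrite /Gamma_mx tr_block_mx !trmx0 trmx1. Qed.

Lemma conj_Gamma_mx : conjm Gamma = Gamma.
Proof. by rewrite /Gamma_mx map_block_mx map_mx1 !raddf0. Qed.

Lemma conj_Omega_mx : conjm Omega = Omega.
Proof.
rewrite /Omega_mx map_block_mx.
by congr block_mx; apply/matrixP => i j; rewrite !mxE;
  case: eqP; rewrite ?conjc0 ?conjc_real.
Qed.

Lemma Gamma_Omega_mx : Gamma *m Omega = Omega *m Gamma.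
Proof.
rewrite /Gamma_mx /Omega_mx !mulmx_block.
by rewrite !mul0mx !mulmx0 !mul1mx !mulmx1 !add0r !addr0.
Qed.

End Matrices.

Theorem lemma2 (R : realType) (N : nat) (v L Lstar : R) (M : nat) (c : nat -> R) :
  (1 <= N)%N -> `|v| < 1 -> 0 < L -> 0 <= Lstar -> (1 <= M)%N -> c 1%N = 1 ->
  (forall n : nat, (1 <= n <= N)%N ->
     @Fk R Lstar M c (@kn R L n) ^+ 2 != v ^+ 2 * @kn R L n ^+ 2) ->
  @R_mx R N v L Lstar M c \in unitmx ->
  (forall (a : 'cV[R[i]]_(N + N)) (mu : R[i]),
     @is_eigvec R N v L Lstar M c a mu ->
     @is_eigvec R N v L Lstar M c (@Gamma_mx R N *m conjv a) (- mu^*)) /\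
  (forall (a b : 'cV[R[i]]_(N + N)) (mu nu : R[i]),
     @is_eigvec R N v L Lstar M c a mu -> @is_eigvec R N v L Lstar M c b nu ->
     let a' := @Gamma_mx R N *m conjv a in
     let b' := @Gamma_mx R N *m conjv b in
     (@Rinner R N v L Lstar M c a b)^* = - @Rinner R N v L Lstar M c a' b' /\
     @Rinner R N v L Lstar M c a b' = - @Rinner R N v L Lstar M c b a').
Proof.
move=> _ _ _ _ _ _ _ Ru.
have GK := Gamma_mxK R N; have conjG := conj_Gamma_mx R N.
have trG := tr_Gamma_mx R N.
have GconjR := Gamma_conj_R_mx N v L Lstar M c.
split=> [a mu [a0 /(eigen_invmx_mulmx Ru) Da]|a b mu nu _ _].
  split; first by rewrite /conjv antiunitary_eq0.
  apply/(eigen_invmx_mulmx Ru).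
  exact (pencil_eigen_antiunitary GconjR (conj_Omega_mx N v L Lstar M c)
    (Gamma_Omega_mx N v L Lstar M c) Da).
split; first exact (sesq_antiunitary_conj GK conjG trG GconjR a b).
exact (sesq_antiunitary_swap trG GconjR (tr_R_mx N v L Lstar M c) a b).
Qed.
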